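(* Let $0<q<1$ and let $s_1,\dots,s_m$ be positive integers with $s_1>1$. Put $y_k:=\prod_{j=1}^k q^{1-s_j}$ for $1\le k\le m$. Then \[ \zeta[s_1,\dots,s_m] = \int \prod_{k=1}^m\bigg(\prod_{r=1}^{s_k-1}\frac{d_qt_r^{(k)}}{t_r^{(k)}}\bigg)\frac{d_qt_{s_k}^{(k)}}{y_k-t_{s_k}^{(k)}}, \] the iterated Jackson $q$-integral over the simplex $1>t_1^{(1)}>\cdots>t_{s_1}^{(1)}>\cdots>t_1^{(m)}>\cdots>t_{s_m}^{(m)}>0$.
   Context: Fix $0<q<1$ and $[x]_q := (1-q^x)/(1-q)$. For positive integers $s_1,\dots,s_m$ with $s_1>1$, $\zeta[s_1,\dots,s_m] := \sum_{k_1>\cdots>k_m>0}\prod_{j=1}^m q^{(s_j-1)k_j}/[k_j]_q^{s_j}$ (sum over positive integers). The Jackson $q$-integral is $\int_0^a g(t)\,d_qt := (1-q)a\sum_{j=0}^\infty q^j g(q^ja)$ for $a>0$. The integral over a simplex $a>u_1>u_2>\cdots>u_N>0$ of $g_1(u_1)d_qu_1\cdots g_N(u_N)d_qu_N$ means the iterated integral $\int_0^a g_1(u_1)\int_0^{u_1}g_2(u_2)\cdots\int_0^{u_{N-1}}g_N(u_N)\,d_qu_N\cdots d_qu_1$, with the variables $t_1^{(1)},\dots,t_{s_m}^{(m)}$ ordered as listed and $a=1$. *)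

From Stdlib Require Import Reals List.
From Coquelicot Require Import Coquelicot.
Open Scope R_scope.

Definition qnum (q : R) (x : nat) : R := (1 - q ^ x) / (1 - q).

Definition zterm (q : R) (s k : nat) : R := q ^ ((s - 1) * k) / (qnum q k) ^ s.

(* ztail q [s_2;...;s_m] K = sum over K > k_2 > ... > k_m > 0 of the product
   of the summands (a finite sum). *)
Fixpoint ztail (q : R) (s : list nat) (K : nat) : R :=
  match s with
  | nil => 1
  | a :: s' =>
      fold_right Rplus 0
        (map (fun k => zterm q a k * ztail q s' k) (seq 1 (K - 1)))
  end.

Definition qzeta (q : R) (s : list nat) : R :=
  match s with
  | nil => 1
  | a :: s' => Series (fun n => zterm q a (S n) * ztail q s' (S n))
  end.

Definition jackson (q : R) (g : R -> R) (a : R) : R :=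
  (1 - q) * a * Series (fun j => q ^ j * g (q ^ j * a)).

(* iterated Jackson integral over a > u_1 > u_2 > ... > u_N > 0 of
   g_1(u_1) d_q u_1 ... g_N(u_N) d_q u_N *)
Fixpoint qiter (q : R) (gs : list (R -> R)) (a : R) : R :=
  match gs with
  | nil => 1
  | g :: gs' => jackson q (fun u => g u * qiter q gs' u) a
  end.

(* the list of integrand factors: for each k, (s_k - 1) copies of 1/t followed
   by 1/(y_k - t), where y_k = prod_{j<=k} q^{1-s_j}; y is the running product *)
Fixpoint qintegrand (q y : R) (s : list nat) : list (R -> R) :=
  match s with
  | nil => nil
  | a :: s' =>
      let y' := y / q ^ (a - 1) in
      repeat (fun t : R => / t) (a - 1) ++ (fun t : R => / (y' - t)) :: qintegrand q y' s'
  end.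

From Stdlib Require Import Reals List Lia Lra.
From Coquelicot Require Import Coquelicot.
Open Scope R_scope.

(* Every stage of the iterated integral, read from the innermost variable
   outwards, is a power series in t / y with nonnegative coefficients.  Against
   d_q u / u the monomial u^n integrates to t^n / [n]_q, so the coefficients are
   divided by [n]_q; against d_q u / (y - u) one first writes
   1 / (y - u) = (1 / u) (u / (y - u)), and multiplication by u / (y - u)
   replaces the coefficients by their shifted partial sums.  After the s_k
   integrations of a block the N-th coefficient is therefore the inner nested
   sum over N > k_(k+1) > ... divided by [N]_q^(s_k), and passing from the
   scale y_k to y_(k-1) = q^(s_k - 1) y_k contributes q^((s_k - 1) N).  At
   t = 1 < y_1 the outer series is the series defining zeta.  All interchanges
   of summation are justified by nonnegativity. *)

Lemma sum_f_R0_le_Series (a : nat -> R) (N : nat) :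
  (forall n, 0 <= a n) -> ex_series a -> sum_f_R0 a N <= Series a.
Proof.
  intros Ha Hex. apply sum_incr; [apply is_series_Reals, Series_correct, Hex | exact Ha].
Qed.

Lemma ex_series_bounded_ge0 (a : nat -> R) (M : R) :
  (forall n, 0 <= a n) -> (forall N, sum_f_R0 a N <= M) -> ex_series a /\ Series a <= M.
Proof.
  intros Ha HM.
  assert (Hlim : ex_finite_lim_seq (sum_n a)).
  { apply ex_finite_lim_seq_incr with M.
    - intros n; rewrite !sum_n_Reals; simpl; specialize (Ha (S n)); lra.
    - intros n; rewrite sum_n_Reals; apply HM. }
  destruct Hlim as [l Hl].
  assert (Hs : is_series a l) by exact Hl.
  split; [exists l; exact Hs |].
  rewrite (is_series_unique _ _ Hs).
  apply (is_lim_seq_le (sum_n a) (fun _ => M) l M); [| exact Hl | apply is_lim_seq_const].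
  intros n; rewrite sum_n_Reals; apply HM.
Qed.

Lemma Series_sum_f_R0 (a : nat -> nat -> R) (N : nat) :
  (forall n, ex_series (fun j => a j n)) ->
  ex_series (fun j => sum_f_R0 (a j) N) /\
  Series (fun j => sum_f_R0 (a j) N) = sum_f_R0 (fun n => Series (fun j => a j n)) N.
Proof.
  intros Hex; induction N as [|N [IHex IHeq]]; simpl.
  - split; [apply Hex | reflexivity].
  - split.
    + apply (ex_series_plus _ _ IHex (Hex (S N))).
    + rewrite Series_plus, IHeq; [reflexivity | exact IHex | apply Hex].
Qed.

Lemma Series_swap_le (a : nat -> nat -> R) :
  (forall j n, 0 <= a j n) -> (forall j, ex_series (a j)) ->
  ex_series (fun j => Series (a j)) ->
  (forall n, ex_series (fun j => a j n)) /\
  ex_series (fun n => Series (fun j => a j n)) /\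
  Series (fun n => Series (fun j => a j n)) <= Series (fun j => Series (a j)).
Proof.
  intros Ha Hrow Hsum.
  assert (Hcol : forall n, ex_series (fun j => a j n)).
  { intros n.
    apply (@ex_series_le R_AbsRing R_CompleteNormedModule _ (fun j => Series (a j)));
      [| exact Hsum].
    intros j. rewrite Rabs_pos_eq by apply Ha.
    apply (Rle_trans _ (sum_f_R0 (a j) n)).
    - destruct n; simpl; [lra |].
      pose proof (cond_pos_sum (a j) n (Ha j)); lra.
    - apply sum_f_R0_le_Series; [apply Ha | apply Hrow]. }
  destruct (ex_series_bounded_ge0 (fun n => Series (fun j => a j n))
              (Series (fun j => Series (a j)))) as [Hex Hle].
  - intros n; apply (Rle_trans _ (sum_f_R0 (fun j => a j n) 0));
      [apply Ha | apply sum_f_R0_le_Series; [intros; apply Ha | apply Hcol]].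
  - intros N. destruct (Series_sum_f_R0 a N Hcol) as [_ <-].
    apply Series_le; [| exact Hsum]. intros j; split.
    + apply cond_pos_sum; intros; apply Ha.
    + apply sum_f_R0_le_Series; [apply Ha | apply Hrow].
  - split; [exact Hcol | split; [exact Hex | exact Hle]].
Qed.

Lemma is_series_swap (a : nat -> nat -> R) (b : nat -> R) :
  (forall j n, 0 <= a j n) -> (forall n, is_series (fun j => a j n) (b n)) ->
  ex_series b -> is_series (fun j => Series (a j)) (Series b).
Proof.
  intros Ha Hcol Hb.
  assert (Eb : forall n, Series (fun j => a j n) = b n)
    by (intros n; apply is_series_unique, Hcol).
  destruct (Series_swap_le (fun n j => a j n)) as [Hrow [Hex Hle]].
  - intros; apply Ha.
  - intros n; exists (b n); apply Hcol.
  - apply (ex_series_ext b); [intros n; symmetry; apply Eb | exact Hb].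
  destruct (Series_swap_le a Ha Hrow Hex) as [_ [_ Hge]].
  rewrite (Series_ext _ _ Eb) in Hle, Hge.
  rewrite <- (Rle_antisym _ _ Hle Hge).
  apply Series_correct, Hex.
Qed.

Lemma is_series_geom_scal (c r : R) :
  0 <= r < 1 -> is_series (fun j => c * r ^ j) (c / (1 - r)).
Proof.
  intros Hr.
  apply (@is_series_scal_l R_AbsRing R_NormedModule c _ _).
  apply is_series_geom. rewrite Rabs_pos_eq; lra.
Qed.

Lemma qnum_ge1 (q : R) (n : nat) : 0 < q < 1 -> (1 <= n)%nat -> 1 <= qnum q n.
Proof.
  intros Hq Hn. destruct n as [|n]; [lia |].
  assert (Hpow : q ^ n <= 1) by (rewrite <- (pow1 n); apply pow_incr; lra).
  unfold qnum. apply Rle_div_r; [lra |]. simpl. nra.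
Qed.

Lemma jackson_ext_pos (q : R) (f g : R -> R) (t : R) :
  0 < q <= 1 -> 0 < t -> (forall u, 0 < u <= t -> f u = g u) ->
  jackson q f t = jackson q g t.
Proof.
  intros Hq Ht Hfg. unfold jackson. f_equal. apply Series_ext. intros j.
  assert (0 < q ^ j) by (apply pow_lt; lra).
  assert (q ^ j <= 1) by (rewrite <- (pow1 j); apply pow_incr; lra).
  rewrite Hfg; [reflexivity | split; nra].
Qed.

Lemma jackson_inv_mul (q : R) (g : R -> R) (t : R) : 0 < q -> 0 < t ->
  jackson q (fun u => / u * g u) t = (1 - q) * Series (fun j => g (q ^ j * t)).
Proof.
  intros Hq Ht. unfold jackson.
  rewrite (Series_ext _ (fun j => / t * g (q ^ j * t))), Series_scal_l; [field; lra |].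
  intros j. assert (0 < q ^ j) by (apply pow_lt; lra). field. lra.
Qed.

Definition is_pseries_on (Y : R) (c : nat -> R) (F : R -> R) : Prop :=
  forall t, 0 < t < Y -> is_series (fun n => c n * (t / Y) ^ n) (F t).

Lemma is_pseries_on_ext (Y : R) (c c' : nat -> R) (F : R -> R) :
  (forall n, c n = c' n) -> is_pseries_on Y c F -> is_pseries_on Y c' F.
Proof.
  intros Hc HF t Ht. apply (is_series_ext _ _ _ (fun n => f_equal (fun z => z * _) (Hc n))), HF, Ht.
Qed.

(* For n = 0 the quotient is [b / 0 = 0]. *)
Lemma div_qnum_bounds (q b : R) (n : nat) :
  0 < q < 1 -> 0 <= b -> 0 <= b / qnum q n <= b.
Proof.
  intros Hq Hb. destruct n as [|n].
  - unfold qnum, Rdiv. simpl. rewrite Rminus_diag, Rmult_0_l, Rinv_0. lra.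
  - pose proof (qnum_ge1 q (S n) Hq ltac:(lia)).
    split; [apply Rdiv_le_0_compat; lra | apply Rle_div_l; nra].
Qed.

Lemma ex_series_div_qnum (q : R) (b : nat -> R) :
  0 < q < 1 -> (forall n, 0 <= b n) -> ex_series b -> ex_series (fun n => b n / qnum q n).
Proof.
  intros Hq Hb Hex. apply (@ex_series_le R_AbsRing R_CompleteNormedModule _ b); [| exact Hex].
  intros n. destruct (div_qnum_bounds q (b n) n Hq (Hb n)).
  rewrite Rabs_pos_eq; lra.
Qed.

Lemma is_series_qpow_geom (q c : R) (n : nat) : 0 < q < 1 -> (1 <= n)%nat ->
  is_series (fun j => c * (q ^ n) ^ j) (c / qnum q n / (1 - q)).
Proof.
  intros Hq Hn. pose proof (pow_lt_1_compat q n ltac:(lra) Hn).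
  replace (c / qnum q n / (1 - q)) with (c / (1 - q ^ n)) by (unfold qnum; field; lra).
  apply is_series_geom_scal; lra.
Qed.

Lemma jackson_inv_pseries (q Y : R) (c : nat -> R) (F : R -> R) :
  0 < q < 1 -> 0 < Y -> (forall n, 0 <= c n) -> c 0%nat = 0 ->
  is_pseries_on Y c F ->
  is_pseries_on Y (fun n => c n / qnum q n) (jackson q (fun u => / u * F u)).
Proof.
  intros Hq HY Hc Hc0 HF t Ht.
  set (x := t / Y).
  assert (Hx : 0 < x < 1) by (split; unfold x; [apply Rdiv_lt_0_compat | apply Rlt_div_l]; lra).
  set (b := fun n => c n * x ^ n).
  assert (Hb : forall n, 0 <= b n) by (intros n; apply Rmult_le_pos, pow_le; [apply Hc | lra]).
  assert (Hexb : ex_series (fun n => b n / qnum q n))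
    by (apply ex_series_div_qnum; [exact Hq | exact Hb | exists (F t); apply HF, Ht]).
  set (a := fun j n => b n * (q ^ n) ^ j).
  assert (Hrow : forall j, is_series (a j) (F (q ^ j * t))).
  { intros j. assert (0 < q ^ j) by (apply pow_lt; lra).
    assert (q ^ j <= 1) by (rewrite <- (pow1 j); apply pow_incr; lra).
    eapply is_series_ext; [| apply HF; split; nra].
    intros n; simpl. unfold a, b, x. rewrite <- pow_mult, Nat.mul_comm, pow_mult.
    unfold Rdiv. rewrite Rmult_assoc, (Rpow_mult_distr (q ^ j)). ring. }
  assert (Hcol : forall n, is_series (fun j => a j n) (b n / qnum q n / (1 - q))).
  { intros [|n]; [| apply is_series_qpow_geom; [exact Hq | lia]].
    unfold a, b. rewrite Hc0.
    replace (0 * x ^ 0 / qnum q 0 / (1 - q)) with (0 / (1 - q)) by (unfold Rdiv; ring).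
    eapply is_series_ext; [| apply (is_series_geom_scal 0 q); lra].
    intros j; simpl; ring. }
  assert (Hab : forall j n, 0 <= a j n)
    by (intros j n; apply Rmult_le_pos, pow_le, pow_le; [apply Hb | lra]).
  pose proof (is_series_swap a _ Hab Hcol (ex_series_scal_r (/ (1 - q)) _ Hexb)) as Hswap.
  rewrite jackson_inv_mul by lra.
  rewrite <- (Series_ext _ _ (fun j => is_series_unique _ _ (Hrow j))).
  rewrite (is_series_unique _ _ Hswap).
  replace ((1 - q) * Series (fun n => b n / qnum q n / (1 - q)))
    with (Series (fun n => b n / qnum q n)) by (unfold Rdiv; rewrite Series_scal_r; field; lra).
  eapply is_series_ext; [| apply Series_correct, Hexb].
  intros n; simpl. unfold b, Rdiv. ring.
Qed.

Definition sum_lt (d : nat -> R) (N : nat) : R :=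
  match N with 0%nat => 0 | S M => sum_f_R0 d M end.

Lemma sum_lt_ge0 (d : nat -> R) (N : nat) : (forall n, 0 <= d n) -> 0 <= sum_lt d N.
Proof. intros Hd. destruct N; simpl; [lra | apply cond_pos_sum, Hd]. Qed.

(* Cauchy product with the geometric series [x / (1 - x) = sum_(N >= 1) x^N]. *)
Lemma is_series_sum_lt (d : nat -> R) (x l : R) :
  0 <= x < 1 -> (forall n, 0 <= d n) -> is_series (fun n => d n * x ^ n) l ->
  is_series (fun N => sum_lt d N * x ^ N) (x / (1 - x) * l).
Proof.
  intros Hx Hd Hl.
  assert (Hgeom : is_series (fun n => x ^ n) (/ (1 - x)))
    by (apply is_series_geom; rewrite Rabs_pos_eq; lra).
  assert (Hprod := is_series_mult_pos _ _ _ _ Hl Hgeom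
    (fun n => Rmult_le_pos _ _ (Hd n) (pow_le x n (proj1 Hx))) (fun n => pow_le x n (proj1 Hx))).
  apply is_series_decr_1.
  match goal with |- is_series _ ?v => replace v with (x * (l * / (1 - x))) end;
    [| unfold plus, opp; simpl; field; lra].
  eapply is_series_ext; [| exact (@is_series_scal_l R_AbsRing R_NormedModule x _ _ Hprod)].
  intros N; simpl. unfold scal; simpl; unfold mult; simpl.
  assert (Hcoef : sum_f_R0 (fun k => d k * x ^ k * x ^ (N - k)) N = sum_f_R0 d N * x ^ N).
  { rewrite Rmult_comm, scal_sum. apply sum_eq. intros i Hi.
    rewrite Rmult_assoc, <- pow_add. replace (i + (N - i))%nat with N by lia. reflexivity. }
  rewrite Hcoef. ring.
Qed.

Lemma is_pseries_on_sum_lt (Y : R) (d : nat -> R) (G : R -> R) :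
  0 < Y -> (forall n, 0 <= d n) -> is_pseries_on Y d G ->
  is_pseries_on Y (sum_lt d) (fun u => u / (Y - u) * G u).
Proof.
  intros HY Hd HG t Ht.
  replace (t / (Y - t)) with (t / Y / (1 - t / Y)) by (field; lra).
  apply is_series_sum_lt; [split | exact Hd | apply HG, Ht].
  - apply Rdiv_le_0_compat; lra.
  - apply Rlt_div_l; lra.
Qed.

Lemma jackson_inv_sub_pseries (q Y : R) (d : nat -> R) (G : R -> R) :
  0 < q < 1 -> 0 < Y -> (forall n, 0 <= d n) -> is_pseries_on Y d G ->
  is_pseries_on Y (fun N => sum_lt d N / qnum q N) (jackson q (fun u => / (Y - u) * G u)).
Proof.
  intros Hq HY Hd HG t Ht.
  rewrite (jackson_ext_pos q _ (fun u => / u * (u / (Y - u) * G u))); [| lra | lra |].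
  - apply jackson_inv_pseries; [exact Hq | exact HY | intros; apply sum_lt_ge0, Hd
      | reflexivity | apply is_pseries_on_sum_lt; assumption | exact Ht].
  - intros u Hu. field. split; lra.
Qed.

Lemma qiter_block_pseries (q Y : R) (d : nat -> R) (rest : list (R -> R)) (k : nat) :
  0 < q < 1 -> 0 < Y -> (forall n, 0 <= d n) -> is_pseries_on Y d (qiter q rest) ->
  is_pseries_on Y (fun N => sum_lt d N / qnum q N ^ S k)
    (qiter q (repeat (fun t => / t) k ++ (fun t => / (Y - t)) :: rest)).
Proof.
  intros Hq HY Hd Hrest. induction k as [|k IH].
  - apply (is_pseries_on_ext _ (fun N => sum_lt d N / qnum q N)).
    + intros N; simpl; rewrite Rmult_1_r; reflexivity.
    + apply jackson_inv_sub_pseries; assumption.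
  - apply (is_pseries_on_ext _ (fun N => sum_lt d N / qnum q N ^ S k / qnum q N)).
    + intros N. unfold Rdiv.
      rewrite Rmult_assoc, <- Rinv_mult, (Rmult_comm (qnum q N ^ S k)). reflexivity.
    + apply jackson_inv_pseries; [exact Hq | exact HY | | | exact IH].
      * intros [|N]; [simpl; unfold Rdiv; lra |].
        pose proof (qnum_ge1 q (S N) Hq ltac:(lia)).
        apply Rdiv_le_0_compat; [apply sum_lt_ge0, Hd | apply pow_lt; lra].
      * simpl; unfold Rdiv; ring.
Qed.

Definition zeta_coef (q : R) (s : list nat) (N : nat) : R :=
  match s, N with
  | nil, 0%nat => 1
  | nil, S _ => 0
  | _ :: _, 0%nat => 0
  | a :: s', S _ => zterm q a N * ztail q s' N
  end.

Lemma fold_right_Rplus_init (l : list R) (c : R) :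
  fold_right Rplus c l = fold_right Rplus 0 l + c.
Proof. induction l as [|x l IH]; simpl; [ring | rewrite IH; ring]. Qed.

Lemma fold_right_Rplus_map_seq1 (G : nat -> R) (M : nat) :
  G 0%nat = 0 -> fold_right Rplus 0 (map G (seq 1 M)) = sum_f_R0 G M.
Proof.
  intros HG0. induction M as [|M IH]; [simpl; lra |].
  rewrite seq_S, map_app, fold_right_app. simpl.
  rewrite fold_right_Rplus_init, IH. ring.
Qed.

Lemma sum_lt_zeta_coef (q : R) (s : list nat) (M : nat) :
  sum_lt (zeta_coef q s) (S M) = ztail q s (S M).
Proof.
  destruct s as [|b s].
  - simpl. induction M as [|M IH]; simpl in *; [reflexivity | rewrite IH; ring].
  - cbn [sum_lt ztail]. replace (S M - 1)%nat with M by lia.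
    rewrite <- (fold_right_Rplus_map_seq1 (zeta_coef q (b :: s))) by reflexivity.
    f_equal. apply map_ext_in. intros [|k] Hk; [apply in_seq in Hk; lia | reflexivity].
Qed.

Lemma zterm_ge0 (q : R) (a k : nat) : 0 < q < 1 -> (1 <= k)%nat -> 0 <= zterm q a k.
Proof.
  intros Hq Hk. pose proof (qnum_ge1 q k Hq Hk).
  apply Rdiv_le_0_compat; apply pow_le || apply pow_lt; lra.
Qed.

Lemma zeta_coef_ge0 (q : R) (s : list nat) (N : nat) : 0 < q < 1 -> 0 <= zeta_coef q s N.
Proof.
  intros Hq. revert N. induction s as [|b s IH]; intros [|M]; simpl; try lra.
  apply Rmult_le_pos; [apply zterm_ge0; [exact Hq | lia] |].
  rewrite <- sum_lt_zeta_coef. apply sum_lt_ge0, IH.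
Qed.

Lemma zeta_coef_cons (q : R) (a : nat) (s : list nat) (N : nat) :
  (1 <= a)%nat ->
  sum_lt (zeta_coef q s) N / qnum q N ^ S (a - 1) * (q ^ (a - 1)) ^ N = zeta_coef q (a :: s) N.
Proof.
  intros Ha. destruct N as [|M]; [simpl; unfold Rdiv; ring |].
  rewrite sum_lt_zeta_coef, <- pow_mult. simpl zeta_coef. unfold zterm.
  replace (S (a - 1)) with a by lia. unfold Rdiv; ring.
Qed.

Lemma qiter_qintegrand_cons (q : R) (a : nat) (s : list nat) (y : R) :
  0 < q < 1 -> (1 <= a)%nat -> 0 < y ->
  is_pseries_on (y / q ^ (a - 1)) (zeta_coef q s) (qiter q (qintegrand q (y / q ^ (a - 1)) s)) ->
  forall t, 0 < t < y / q ^ (a - 1) ->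
  is_series (fun N => zeta_coef q (a :: s) N * (t / y) ^ N) (qiter q (qintegrand q y (a :: s)) t).
Proof.
  intros Hq Ha Hy Hs t Ht.
  assert (Hpow : 0 < q ^ (a - 1)) by (apply pow_lt; lra).
  assert (Hy' : 0 < y / q ^ (a - 1)) by (apply Rdiv_lt_0_compat; lra).
  assert (Hblock := qiter_block_pseries q _ _ _ (a - 1) Hq Hy'
    (fun n => zeta_coef_ge0 q s n Hq) Hs t Ht).
  eapply is_series_ext; [| exact Hblock].
  (* [is_series_ext] states the equation in a normed-module carrier; [ring] needs it at [R]. *)
  intros N; match goal with |- ?x = ?y => change (@eq R x y) end.
  rewrite <- zeta_coef_cons by exact Ha.
  replace (t / (y / q ^ (a - 1))) with (t / y * q ^ (a - 1)) by (field; lra).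
  rewrite Rpow_mult_distr. ring.
Qed.

Lemma le_div_pow (q y : R) (n : nat) : 0 < q <= 1 -> 0 < y -> y <= y / q ^ n.
Proof.
  intros Hq Hy. assert (0 < q ^ n) by (apply pow_lt; lra).
  assert (q ^ n <= 1) by (rewrite <- (pow1 n); apply pow_incr; lra).
  apply Rle_div_r; [lra |]. nra.
Qed.

Lemma qiter_qintegrand_pseries (q : R) (s : list nat) (y : R) :
  0 < q < 1 -> List.Forall (fun x : nat => Nat.le 1 x) s -> 0 < y ->
  is_pseries_on y (zeta_coef q s) (qiter q (qintegrand q y s)).
Proof.
  intros Hq Hs. revert y. induction Hs as [|a s Ha Hs IH]; intros y Hy t Ht.
  - replace (qiter q (qintegrand q y nil) t) with (1 / (1 - 0)) by (simpl; field).
    eapply is_series_ext; [| apply (is_series_geom_scal 1 0); lra].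
    intros [|N]; simpl; ring.
  - pose proof (le_div_pow q y (a - 1) ltac:(lra) Hy).
    apply qiter_qintegrand_cons; [exact Hq | exact Ha | exact Hy | | lra].
    apply IH. lra.
Qed.

Theorem corollary6p4 (q : R) (s : list nat) :
  0 < q < 1 ->
  s <> nil ->
  List.Forall (fun x : nat => Nat.le 1 x) s ->
  Nat.lt 1 (List.hd 0%nat s) ->
  qzeta q s = qiter q (qintegrand q 1 s) 1.
Proof.
  intros Hq Hne Hs Hhd.
  destruct s as [|a s]; [congruence |]. simpl in Hhd.
  inversion Hs as [|? ? Ha Hs']; subst.
  assert (Hy1 : 1 < 1 / q ^ (a - 1)).
  { pose proof (pow_lt_1_compat q (a - 1) ltac:(lra) ltac:(lia)).
    pose proof (pow_lt q (a - 1) ltac:(lra)).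
    apply Rlt_div_r; lra. }
  assert (Hser := qiter_qintegrand_cons q a s 1 Hq Ha Rlt_0_1
    (qiter_qintegrand_pseries q s (1 / q ^ (a - 1)) Hq Hs' ltac:(lra)) 1 ltac:(lra)).
  unfold qzeta. apply is_series_unique.
  apply (is_series_ext (fun n => zeta_coef q (a :: s) (S n) * (1 / 1) ^ S n)).
  { intros n. simpl. replace (1 / 1) with 1 by field. rewrite pow1. ring. }
  apply (is_series_incr_1 (fun N => zeta_coef q (a :: s) N * (1 / 1) ^ N)).
  match goal with |- is_series _ ?v => replace v with (qiter q (qintegrand q 1 (a :: s)) 1) end;
    [exact Hser | unfold plus; simpl; ring].
Qed.
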